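(* Let $m\ge 1$ and $\epsilon>0$. Suppose $p_1,\dots,p_m$ and $q_1,\dots,q_m$ are unknown probability distributions on $\{0,1\}$, accessible in the query model: for any index $i$ one may request independent samples from $p_i$ or from $q_i$. There is a randomized algorithm that outputs ''Yes'' with probability at least $2/3$ if $p_i=q_i$ for all $1\le i\le m$, outputs ''No'' with probability at least $2/3$ if $\frac{1}{m}\sum_{i=1}^m\|p_i-q_i\|_2^2>\epsilon^2$, and uses in total $O\!\left(\frac{(1+\log m)^4}{\epsilon^2}\right)$ samples.
   Context: $\|p-q\|_2$ denotes the Euclidean norm of the difference of the probability vectors $p=(p(0),p(1))$ and $q=(q(0),q(1))$. *)

From HB Require Import structures.
From mathcomp Require Import all_boot all_order all_algebra.
From mathcomp Require Import all_classical all_reals all_analysis.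
Set Implicit Arguments. Unset Strict Implicit. Unset Printing Implicit Defensive.
Import Order.TTheory GRing.Theory Num.Theory.
Local Open Scope ring_scope.

(* A distribution on {0,1}, given as its probability vector (d false, d true)
   = (d(0), d(1)). *)
Definition is_dist (R : realType) (d : bool -> R) : Prop :=
  0 <= d false /\ 0 <= d true /\ d false + d true = 1.

Definition sqdist (R : realType) (d e : bool -> R) : R :=
  (d false - e false) ^+ 2 + (d true - e true) ^+ 2.

(* Randomized adaptive algorithms in the query model, as finite decision trees:
   - Ret b       : stop, output b (true = "Yes", false = "No");
   - Query i s k : draw one fresh independent sample from p_i (s = false)
                   or from q_i (s = true), observe the bit x, continue with k x;
   - Flip r a b  : internal randomness: with probability r continue with a,
                   otherwise with b. *)
Inductive alg (R : Type) (m : nat) : Type :=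
| Ret of bool
| Query of 'I_m & bool & (bool -> alg R m)
| Flip of R & alg R m & alg R m.

Arguments Ret {R m}.
Arguments Query {R m}.
Arguments Flip {R m}.

Fixpoint wf_alg (R : realType) (m : nat) (A : alg R m) : Prop :=
  match A with
  | Ret _ => True
  | Query _ _ k => wf_alg (k false) /\ wf_alg (k true)
  | Flip r a b => 0 <= r <= 1 /\ wf_alg a /\ wf_alg b
  end.

Fixpoint cost (R : Type) (m : nat) (A : alg R m) : nat :=
  match A with
  | Ret _ => 0
  | Query _ _ k => (maxn (cost (k false)) (cost (k true))).+1
  | Flip _ a b => maxn (cost a) (cost b)
  end.

Fixpoint prob_yes (R : realType) (m : nat) (p q : 'I_m -> bool -> R)
    (A : alg R m) : R :=
  match A with
  | Ret b => if b then 1 else 0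
  | Query i s k =>
      let d := if s then q i else p i in
      d false * prob_yes p q (k false) + d true * prob_yes p q (k true)
  | Flip r a b => r * prob_yes p q a + (1 - r) * prob_yes p q b
  end.

From HB Require Import structures.
From mathcomp Require Import all_boot all_order all_algebra.
From mathcomp Require Import all_classical all_reals all_analysis.
From mathcomp Require Import ring lra zify.
Import Order.TTheory GRing.Theory Num.Theory.
Local Open Scope ring_scope.
Set Implicit Arguments. Unset Strict Implicit. Unset Printing Implicit Defensive.

(* Write d_i = (p_i(1) - q_i(1))^2, so that ||p_i - q_i||_2^2 = 2 d_i.  The
   pair test at index i draws t samples from each of p_i and q_i and accepts
   iff the squared difference of the two counts of ones is below a threshold
   th; by Chebyshev's inequality it errs with probability at most t / (2 th),
   both when p_i = q_i and when t^2 d_i >= 4 th.  A round at scale j picks i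
   uniformly and repeats this test r = O(log m) times, accepting if some run
   accepts: false rejections become 4^-r-unlikely while false acceptances
   grow at most r-fold.  The tester runs about 2^j rounds at each of the
   O(log m) scales j, tuned to detect d_i >= gap j = base_gap 2^j, and
   accepts iff all rounds accept.  If p = q, a union bound over the at most
   2^r rounds gives rejection probability <= 2^-r.  Otherwise a dyadic
   bucketing of the d_i yields a scale j where at least m / 2^(j+1) indices
   have d_i >= gap j, so each of its rounds rejects with probability
   >= 2^-(j+2) and all of them accept with probability <= e^-2 < 1/3. *)

Section Combinators.
Variables (R : realType) (m : nat).

Fixpoint branch (A a b : alg R m) : alg R m :=
  match A with
  | Ret x => if x then a else b
  | Query i s k => Query i s (fun x => branch (k x) a b)
  | Flip r u v => Flip r (branch u a b) (branch v a b)
  end.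

Fixpoint all_of (n : nat) (B : nat -> alg R m) : alg R m :=
  match n with
  | 0 => Ret true
  | n'.+1 => branch (all_of n' B) (B n') (Ret false)
  end.

Fixpoint any_rep (B : alg R m) (r : nat) : alg R m :=
  match r with
  | 0 => Ret false
  | r'.+1 => branch B (Ret true) (any_rep B r')
  end.

Fixpoint count_ones (i : 'I_m) (s : bool) (n c : nat) (k : nat -> alg R m) :
    alg R m :=
  match n with
  | 0 => k c
  | n'.+1 => Query i s (fun x => count_ones i s n' (c + x) k)
  end.

Fixpoint unif_choice (s : seq 'I_m) (k : 'I_m -> alg R m) : alg R m :=
  match s with
  | [::] => Ret true
  | x :: s' => Flip ((size s').+1%:R^-1) (k x) (unif_choice s' k)
  end.

Lemma wf_branch (A a b : alg R m) :
  wf_alg A -> wf_alg a -> wf_alg b -> wf_alg (branch A a b).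
Proof.
move=> + wa wb; elim: A => [[]|i s k IH|r u IHu v IHv] //=.
- by case=> /IH ? /IH ?.
- by case=> ? [/IHu ? /IHv ?].
Qed.

Lemma cost_branch (A a b : alg R m) :
  (cost (branch A a b) <= cost A + maxn (cost a) (cost b))%N.
Proof.
elim: A => [[]|i s k IH|r u IHu v IHv] /=; rewrite ?leq_maxl ?leq_maxr //.
- have := IH false; have := IH true; lia.
- have := IHu; have := IHv; lia.
Qed.

Lemma wf_all_of n B : (forall j, wf_alg (B j)) -> wf_alg (all_of n B).
Proof. by move=> wB; elim: n => //= n IH; apply: wf_branch. Qed.

Lemma cost_all_of n B : (cost (all_of n B) <= \sum_(j < n) cost (B j))%N.
Proof.
elim: n => [|n IH]; first by rewrite big_ord0.
rewrite big_ord_recr /=; apply: leq_trans (cost_branch _ _ _) _.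
by rewrite maxn0 leq_add2r.
Qed.

Lemma wf_any_rep B r : wf_alg B -> wf_alg (any_rep B r).
Proof. by move=> wB; elim: r => //= r IH; apply: wf_branch. Qed.

Lemma cost_any_rep B r : (cost (any_rep B r) <= r * cost B)%N.
Proof.
elim: r => //= r IH; apply: leq_trans (cost_branch _ _ _) _.
by rewrite mulSn leq_add2l max0n.
Qed.

Lemma wf_count_ones i s n c k :
  (forall c, wf_alg (k c)) -> wf_alg (count_ones i s n c k).
Proof. by move=> wk; elim: n c => //= n IH c. Qed.

Lemma cost_count_ones i s n c k B :
  (forall c, cost (k c) <= B)%N -> (cost (count_ones i s n c k) <= n + B)%N.
Proof. by move=> hk; elim: n c => //= n IH c; rewrite ltnS geq_max !IH. Qed.

Lemma wf_unif_choice s k : (forall x, wf_alg (k x)) -> wf_alg (unif_choice s k).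
Proof.
move=> wk; elim: s => //= x s IH; split=> //.
by rewrite invr_ge0 ler0n invf_le1 ?ler1n ?ltr0n.
Qed.

Lemma cost_unif_choice s k B :
  (forall x, cost (k x) <= B)%N -> (cost (unif_choice s k) <= B)%N.
Proof. by move=> hk; elim: s => //= x s IH; rewrite geq_max hk. Qed.

End Combinators.

(* Expectations over binomially distributed counts: binom_exp d n c g is the
   expected value of g (c + X) where X counts the ones among n independent
   samples of the distribution d on {0,1}. *)
Section BinomialExpectation.
Variables (R : realType) (d : bool -> R).
Hypothesis Hd : is_dist d.

Fixpoint binom_exp (n c : nat) (g : nat -> R) : R :=
  match n with
  | 0 => g c
  | n'.+1 => d false * binom_exp n' c g + d true * binom_exp n' c.+1 g
  end.

Lemma eq_binom_exp n c f g : f =1 g -> binom_exp n c f = binom_exp n c g.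
Proof. by move=> fg; elim: n c => /= [|n IH] c; rewrite ?IH. Qed.

Lemma ler_binom_exp n c f g :
  (forall x, f x <= g x) -> binom_exp n c f <= binom_exp n c g.
Proof.
have [? [? _]] := Hd; move=> fg; elim: n c => //= n IH c.
by apply: lerD; apply: ler_wpM2l.
Qed.

Lemma binom_exp_affine n c f (a b : R) :
  binom_exp n c (fun x => a * f x + b) = a * binom_exp n c f + b.
Proof.
have d0 : d false = 1 - d true by have [_ [_ <-]] := Hd; rewrite addrK.
by elim: n c => //= n IH c; rewrite !IH d0; ring.
Qed.

(* Mean c + n d(1) and variance n d(1) (1 - d(1)) of the count. *)
Lemma binom_exp_sq n c (y : R) :
  binom_exp n c (fun x => (x%:R - y) ^+ 2) =
  (c%:R + n%:R * d true - y) ^+ 2 + n%:R * (d true * (1 - d true)).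
Proof.
have d0 : d false = 1 - d true by have [_ [_ <-]] := Hd; rewrite addrK.
elim: n c => /= [|n IH] c; first by rewrite !mul0r !addr0.
by rewrite !IH d0 -!natr1; ring.
Qed.

End BinomialExpectation.

Section Semantics.
Variables (R : realType) (m : nat) (p q : 'I_m -> bool -> R).
Hypotheses (Hp : forall i, is_dist (p i)) (Hq : forall i, is_dist (q i)).

Local Notation P := (prob_yes p q).

Lemma source_dist i (s : bool) : is_dist (if s then q i else p i).
Proof. by case: s. Qed.

Lemma prob_yes_bounds (A : alg R m) : wf_alg A -> 0 <= P A <= 1.
Proof.
elim: A => [[]|i s k IH|r a IHa b IHb] /=; rewrite ?lexx ?ler01 //.
- case=> /IH /andP[x0 x1] /IH /andP[y0 y1].
  have [? [? ?]] := source_dist i s.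
  move: x0 x1 y0 y1; set x := P (k false); set y := P (k true) => *.
  apply/andP; split; nra.
- case=> /andP[? ?] [/IHa /andP[x0 x1] /IHb /andP[y0 y1]].
  move: x0 x1 y0 y1; set x := P a; set y := P b => *.
  apply/andP; split; nra.
Qed.

Lemma prob_branch (A a b : alg R m) :
  wf_alg A -> P (branch A a b) = P A * P a + (1 - P A) * P b.
Proof.
elim: A => [[]|i s k IH|r u IHu v IHv] /=; try by move=> _; ring.
- case=> /IH -> /IH ->.
  have [_ [_ e]] := source_dist i s.
  have -> : (if s then q i else p i) false = 1 - (if s then q i else p i) true.
    by rewrite -e addrK.
  ring.
- case=> _ [/IHu -> /IHv ->]; ring.
Qed.

Lemma prob_all_of n (B : nat -> alg R m) :
  (forall j, wf_alg (B j)) -> P (all_of n B) = \prod_(j < n) P (B j).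
Proof.
move=> wB; elim: n => [|n IH]; first by rewrite big_ord0.
rewrite big_ord_recr /= prob_branch; last exact: wf_all_of.
by rewrite IH /=; ring.
Qed.

Lemma prob_any_rep_reject (B : alg R m) r :
  wf_alg B -> 1 - P (any_rep B r) = (1 - P B) ^+ r.
Proof.
move=> wB; elim: r => /= [|r IH]; first by rewrite expr0 subr0.
by rewrite prob_branch // exprS -IH /=; ring.
Qed.

Lemma prob_any_rep_le (B : alg R m) r :
  wf_alg B -> P (any_rep B r) <= r%:R * P B.
Proof.
move=> wB; elim: r => /= [|r IH]; first by rewrite mul0r.
rewrite prob_branch // /= mulr1 -natr1.
have /andP[x0 x1] := prob_yes_bounds wB.
have /andP[y0 y1] := prob_yes_bounds (wf_any_rep r wB).
move: IH x0 x1 y0 y1; set x := P B; set y := P (any_rep B r) => *.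
nra.
Qed.

Lemma prob_unif_choice (s : seq 'I_m) k :
  s != [::] -> P (unif_choice s k) * (size s)%:R = \sum_(x <- s) P (k x).
Proof.
elim: s => //= x s IH _; rewrite big_cons.
case: s IH => [|y s] IH.
  by rewrite big_nil /= invr1 mul1r subrr mul0r !addr0 mulr1.
rewrite -(IH isT) -natr1.
set n := (size (y :: s))%:R.
have n1 : n + 1 != 0 by rewrite natr1 pnatr_eq0.
by field.
Qed.

Lemma prob_count_ones i s n c k :
  P (count_ones i s n c k) =
  binom_exp (if s then q i else p i) n c (fun c' => P (k c')).
Proof. by elim: n c => //= n IH c; rewrite !IH addn0 addn1. Qed.

End Semantics.

Definition pair_test (R : realType) m (i : 'I_m) (t : nat) (th : R) : alg R m :=
  count_ones i false t 0 (fun cp => count_ones i true t 0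
    (fun cq => Ret ((cp%:R - cq%:R) ^+ 2 < th))).

Lemma wf_pair_test (R : realType) m (i : 'I_m) t (th : R) :
  wf_alg (pair_test i t th).
Proof. by apply: wf_count_ones => c; apply: wf_count_ones. Qed.

Lemma cost_pair_test (R : realType) m (i : 'I_m) t (th : R) :
  (cost (pair_test i t th) <= t + t)%N.
Proof.
apply: cost_count_ones => c.
by apply: leq_trans (cost_count_ones (B := 0) _ _ _ _ _) _; rewrite ?addn0.
Qed.

Lemma bernoulli_var_le (R : realFieldType) (a : R) : a * (1 - a) <= 1 / 4.
Proof. have := sqr_ge0 (a - 1 / 2); nra. Qed.

(* Error bounds of the pair test, via Chebyshev's inequality for the
   difference X - Y of the two counts. *)
Section PairTestAnalysis.
Variables (R : realType) (m : nat) (p q : 'I_m -> bool -> R).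
Hypotheses (Hp : forall i, is_dist (p i)) (Hq : forall i, is_dist (q i)).
Variables (i : 'I_m) (t : nat).

Definition pair_exp (f : nat -> nat -> R) : R :=
  binom_exp (p i) t 0 (fun x => binom_exp (q i) t 0 (f x)).

Lemma prob_pair_test th :
  prob_yes p q (pair_test i t th) =
  pair_exp (fun x y => if (x%:R - y%:R) ^+ 2 < th then 1 else 0).
Proof.
rewrite prob_count_ones; apply: eq_binom_exp => x.
by rewrite prob_count_ones.
Qed.

Lemma ler_pair_exp f g :
  (forall x y, f x y <= g x y) -> pair_exp f <= pair_exp g.
Proof. by move=> fg; apply: ler_binom_exp => // x; apply: ler_binom_exp. Qed.

Lemma pair_exp_affine f (a b : R) :
  pair_exp (fun x y => a * f x y + b) = a * pair_exp f + b.
Proof.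
rewrite /pair_exp -binom_exp_affine //; apply: eq_binom_exp => x.
exact: binom_exp_affine.
Qed.

Lemma pair_exp_sq (z : R) :
  pair_exp (fun x y => (x%:R - y%:R - z) ^+ 2) =
  (t%:R * p i true - t%:R * q i true - z) ^+ 2
    + t%:R * (p i true * (1 - p i true)) + t%:R * (q i true * (1 - q i true)).
Proof.
pose vq := t%:R * (q i true * (1 - q i true)).
rewrite /pair_exp (@eq_binom_exp _ _ _ _ _
  (fun x => 1 * (x%:R - (t%:R * q i true + z)) ^+ 2 + vq)); last first.
  move=> x; rewrite (@eq_binom_exp _ _ _ _ _ (fun y => (y%:R - (x%:R - z)) ^+ 2)).
    by rewrite binom_exp_sq // /vq; ring.
  by move=> y; ring.
by rewrite binom_exp_affine // binom_exp_sq // /vq; ring.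
Qed.

(* Chebyshev: an event contained in {|X - Y - z| >= sqrt th} has probability
   at most ((E[X - Y] - z)^2 + Var(X - Y)) / th, and Var(X - Y) <= t / 2. *)
Lemma pair_exp_chebyshev f (z th : R) : 0 < th ->
  (forall x y, f x y <= th^-1 * (x%:R - y%:R - z) ^+ 2) ->
  pair_exp f <= th^-1 * ((t%:R * p i true - t%:R * q i true - z) ^+ 2 + t%:R / 2).
Proof.
move=> th0 hf; apply: le_trans (ler_pair_exp (g := fun x y =>
  th^-1 * (x%:R - y%:R - z) ^+ 2 + 0) _) _; first by move=> x y; rewrite addr0.
rewrite pair_exp_affine pair_exp_sq addr0 -addrA; apply: ler_wpM2l.
  by rewrite invr_ge0 ltW.
have := bernoulli_var_le (p i true); have := bernoulli_var_le (q i true).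
have : (0 : R) <= t%:R by [].
nra.
Qed.

(* Equal distributions: the counts agree in mean, so rejection requires a
   deviation of size sqrt th. *)
Lemma pair_test_null (th : R) : 0 < th -> p i = q i ->
  1 - prob_yes p q (pair_test i t th) <= (t%:R / 2) / th.
Proof.
move=> th0 pq; rewrite prob_pair_test.
set acc := fun x y => _.
have -> : 1 - pair_exp acc = pair_exp (fun x y => -1 * acc x y + 1).
  by rewrite pair_exp_affine; ring.
apply: le_trans (pair_exp_chebyshev (z := 0) th0 _) _.
  move=> x y; rewrite /acc subr0; case: ifP => [_|/negbT].
    by rewrite mulN1r addNr mulr_ge0 ?sqr_ge0 // invr_ge0 ltW.
  by rewrite -leNgt mulr0 add0r mulrC ler_pdivlMr // mul1r.
by rewrite pq subrr subr0 expr0n /= add0r mulrC.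
Qed.

(* Distant distributions: the mean difference t (p_i(1) - q_i(1)) is at least
   2 sqrt th, so acceptance requires a deviation of size sqrt th. *)
Lemma pair_test_alt (th : R) : 0 < th ->
  4 * th <= (t%:R * (p i true - q i true)) ^+ 2 ->
  prob_yes p q (pair_test i t th) <= (t%:R / 2) / th.
Proof.
move=> th0 far; rewrite prob_pair_test.
pose z := t%:R * (p i true - q i true).
apply: le_trans (pair_exp_chebyshev (z := z) th0 _) _.
  move=> x y; case: ifP => [near|_]; last first.
    by rewrite mulr_ge0 ?sqr_ge0 // invr_ge0 ltW.
  rewrite mulrC ler_pdivlMr // mul1r.
  move: near far; rewrite -/z; set X := (x%:R - y%:R : R) => near far.
  have := sqr_ge0 (2 * X - z); nra.
have -> : t%:R * p i true - t%:R * q i true - z = 0 by rewrite /z; ring.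
by rewrite expr0n /= add0r mulrC.
Qed.

End PairTestAnalysis.

Definition indic {R : pzSemiRingType} (b : bool) : R := if b then 1 else 0.

Lemma indic_ge0 (R : numDomainType) (b : bool) : 0 <= indic b :> R.
Proof. by case: b; rewrite /indic ?ler01. Qed.

Definition round (R : realType) m (t : nat) (th : R) (r : nat) : alg R m :=
  unif_choice (enum 'I_m) (fun i => any_rep (pair_test i t th) r).

Lemma wf_round (R : realType) m t (th : R) r : wf_alg (round m t th r).
Proof. by apply: wf_unif_choice => i; apply/wf_any_rep/wf_pair_test. Qed.

Lemma cost_round (R : realType) m t (th : R) r :
  (cost (round m t th r) <= r * (t + t))%N.
Proof.
apply: cost_unif_choice => i; apply: leq_trans (cost_any_rep _ _) _.
by rewrite leq_mul2l cost_pair_test orbT.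
Qed.

Section RoundAnalysis.
Variables (R : realType) (m : nat) (p q : 'I_m -> bool -> R).
Hypotheses (Hp : forall i, is_dist (p i)) (Hq : forall i, is_dist (q i)).
Hypothesis m_gt0 : (0 < m)%N.
Variables (t : nat) (th : R) (r : nat).
Hypothesis th_gt0 : 0 < th.

Local Notation P := (prob_yes p q).

Lemma prob_round :
  P (round m t th r) = m%:R^-1 * \sum_(i < m) P (any_rep (pair_test i t th) r).
Proof.
have := @prob_unif_choice R m p q (enum 'I_m) (fun i => any_rep (pair_test i t th) r).
rewrite size_enum_ord big_enum => <-; last by rewrite -size_eq0 size_enum_ord -lt0n.
by field; rewrite pnatr_eq0 -lt0n.
Qed.

Lemma mean_const (c : R) : m%:R^-1 * \sum_(i < m) c = c.
Proof. by rewrite sumr_const card_ord -mulr_natl; field; rewrite pnatr_eq0 -lt0n. Qed.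

Lemma round_null : (forall i, p i = q i) -> (t%:R / 2) / th <= 1 / 4 ->
  1 - P (round m t th r) <= (1 / 4) ^+ r.
Proof.
move=> pq small; rewrite prob_round -{1}(mean_const 1) -mulrBr -sumrB.
rewrite -[X in _ <= X]mean_const ler_wpM2l ?invr_ge0 //; apply: ler_sum => i _.
rewrite prob_any_rep_reject //; last exact: wf_pair_test.
have := pair_test_null Hp Hq t th_gt0 (pq i).
have /andP[? ?] := prob_yes_bounds Hp Hq (wf_pair_test i t th).
by move=> ?; apply: lerXn2r; rewrite ?nnegrE; lra.
Qed.

Lemma round_alt (far : pred 'I_m) : r%:R * ((t%:R / 2) / th) <= 1 / 2 ->
  (forall i, far i -> 4 * th <= (t%:R * (p i true - q i true)) ^+ 2) ->
  P (round m t th r) <= 1 - (\sum_(i < m) indic (far i)) / (2 * m%:R).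
Proof.
move=> small hfar.
have -> : 1 - (\sum_(i < m) indic (far i)) / (2 * m%:R) =
          m%:R^-1 * \sum_(i < m) (1 - indic (far i) / 2) :> R.
  rewrite sumrB -mulr_suml mulrBr mean_const; congr (_ - _).
  by field; rewrite pnatr_eq0 -lt0n.
rewrite prob_round ler_wpM2l ?invr_ge0 //; apply: ler_sum => i _.
have /andP[? ?] := prob_yes_bounds Hp Hq (wf_any_rep r (wf_pair_test i t th)).
rewrite /indic; case: (boolP (far i)) => [fi|_]; last by rewrite mul0r subr0.
have := pair_test_alt Hp Hq th_gt0 (hfar i fi).
have := prob_any_rep_le Hp Hq r (wf_pair_test i t th).
have : (0 : R) <= r%:R by [].
nra.
Qed.

End RoundAnalysis.

Lemma dyadic_cover (R : realFieldType) (g0 x : R) J : 0 <= g0 ->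
  Num.min x (g0 * 2 ^+ J) <=
  g0 + \sum_(j < J) indic (g0 * 2 ^+ j <= x) * (g0 * 2 ^+ j).
Proof.
move=> g0_ge0; elim: J => [|J IH].
  by rewrite big_ord0 addr0 expr0 mulr1 ge_min lexx orbT.
rewrite big_ord_recr /= exprS mulrCA.
have lvl_ge0 : 0 <= g0 * 2 ^+ J by rewrite mulr_ge0 // exprn_ge0.
case: (leP (g0 * 2 ^+ J) x) => reach /=; rewrite /indic ?mul1r ?mul0r ?addr0.
- rewrite (min_r reach) in IH.
  by rewrite ge_min; apply/orP; right; lra.
- by rewrite (min_l (ltW reach)) in IH; rewrite min_l //; lra.
Qed.

Lemma dyadic_bucket (R : realFieldType) m (d : 'I_m -> R) (g0 : R) J :
  0 < g0 -> (m < 2 ^ J)%N ->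
  m%:R * g0 * (J%:R + 2) / 2 < \sum_(i < m) d i ->
  exists2 j, (j <= J)%N &
    m%:R <= (\sum_(i < m) indic (g0 * 2 ^+ j <= d i)) * 2 ^+ j.+1 :> R.
Proof.
move=> g0_gt0 mJ big_sum.
pose N j : R := \sum_(i < m) indic (g0 * 2 ^+ j <= d i).
have [/existsP[j hj]|/existsPn few] :=
  boolP [exists j : 'I_J.+1, m%:R <= N j * 2 ^+ j.+1].
  by exists j; rewrite // -ltnS.
have {}few j : (j <= J)%N -> N j * 2 ^+ j.+1 < m%:R.
  by move=> jJ; have := few (Ordinal (jJ : (j < J.+1)%N)); rewrite ltNge.
have N_ge0 j : 0 <= N j by apply: sumr_ge0 => i _; exact: indic_ge0.
have below i : d i < g0 * 2 ^+ J.
  rewrite ltNge; apply/negP => top.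
  have N1 : 1 <= N J.
    rewrite /N (bigD1 i) //= /indic top lerDl.
    by apply: sumr_ge0 => k _; exact: indic_ge0.
  have lvl : (0 : R) <= 2 ^+ J.+1 by rewrite exprn_ge0.
  have := ler_wpM2r lvl N1; have := few J (leqnn J).
  have : (m%:R : R) < 2 ^+ J by rewrite -natrX ltr_nat.
  have : (0 : R) <= 2 ^+ J by rewrite exprn_ge0.
  rewrite exprS; lra.
have cover : \sum_(i < m) d i <= m%:R * g0 + \sum_(j < J) N j * (g0 * 2 ^+ j).
  have pt i : d i <= g0 + \sum_(j < J) indic (g0 * 2 ^+ j <= d i) * (g0 * 2 ^+ j).
    by have := dyadic_cover (d i) J (ltW g0_gt0); rewrite (min_l (ltW (below i))).
  apply: le_trans (ler_sum _ (fun i _ => pt i)) _.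
  rewrite big_split /= sumr_const card_ord -[g0 *+ m]mulr_natl lerD2l exchange_big /=.
  by apply: ler_sum => j _; rewrite /N mulr_suml lexx.
have levels : \sum_(j < J) N j * (g0 * 2 ^+ j) <= \sum_(j < J) m%:R * (g0 / 2).
  apply: ler_sum => j _.
  have -> : N j * (g0 * 2 ^+ j) = N j * 2 ^+ j.+1 * (g0 / 2) by rewrite exprS; field.
  by rewrite ler_wpM2r ?divr_ge0 ?ltW // few // ltnW.
rewrite sumr_const card_ord -[_ *+ J]mulr_natl in levels.
have split_bound : m%:R * g0 * (J%:R + 2) / 2 = m%:R * g0 + J%:R * (m%:R * (g0 / 2)).
  by field.
lra.
Qed.

Lemma threshold_budget (R : realFieldType) (t r : nat) (g : R) :
  0 < g -> (4 <= r)%N -> 4 * r%:R <= t%:R * g ->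
  let th := t%:R ^+ 2 * g / 4 in
  [/\ 0 < th, (t%:R / 2) / th <= 1 / 4 & r%:R * ((t%:R / 2) / th) <= 1 / 2].
Proof.
move=> g_gt0 r4 large th.
have r4R : (4 : R) <= r%:R by rewrite (ler_nat R 4 r).
have tg_gt0 : 0 < t%:R * g by lra.
have t_gt0 : (0 : R) < t%:R by move: tg_gt0; rewrite pmulr_lgt0.
have -> : (t%:R / 2) / th = 2 / (t%:R * g) by rewrite /th; field; rewrite !lt0r_neq0.
split; first by rewrite /th divr_gt0 // mulr_gt0 // exprn_gt0.
  by rewrite ler_pdivrMr //; lra.
by rewrite mulrA ler_pdivrMr //; lra.
Qed.

(* Scale j
   (0 <= j <= nscales m, where m < 2^(nscales m)) targets the indices whose
   gap d_i = (p_i(1) - q_i(1))^2 is at least gap j = base_gap 2^j; it runs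
   nrounds j rounds using nsamples j samples per pair test. *)
Section TesterParameters.
Variables (R : realType) (m : nat) (eps : R).

Definition nscales : nat := (trunc_log 2 m).+1.
Definition reps : nat := (nscales + 4)%N.
Definition base_gap : R := eps ^+ 2 / (nscales + 2)%:R.
Definition gap (j : nat) : R := base_gap * 2 ^+ j.
Definition nsamples (j : nat) : nat := (Num.truncn (4 * reps%:R / gap j)).+1.
Definition threshold (j : nat) : R := (nsamples j)%:R ^+ 2 * gap j / 4.
Definition nrounds (j : nat) : nat := if gap j <= 1 then (2 ^ (j + 3))%N else 0%N.

Definition scale_round (j : nat) : alg R m :=
  round m (nsamples j) (threshold j) reps.

Definition tester : alg R m :=
  all_of nscales.+1 (fun j => all_of (nrounds j) (fun _ => scale_round j)).

Lemma wf_tester : wf_alg tester.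
Proof. by apply: wf_all_of => j; apply: wf_all_of => _; apply: wf_round. Qed.

Hypothesis eps_gt0 : 0 < eps.

Lemma base_gap_gt0 : 0 < base_gap.
Proof. by rewrite divr_gt0 ?exprn_gt0 ?ltr0n ?addn2. Qed.

Lemma gap_gt0 j : 0 < gap j.
Proof. by rewrite mulr_gt0 ?base_gap_gt0 ?exprn_gt0. Qed.

Lemma nsamples_large j : 4 * reps%:R <= (nsamples j)%:R * gap j.
Proof. by rewrite -ler_pdivrMr ?gap_gt0 // ltW // truncnS_gt. Qed.

Lemma scale_round_budget j :
  let t := nsamples j in
  [/\ 0 < threshold j, (t%:R / 2) / threshold j <= 1 / 4
    & reps%:R * ((t%:R / 2) / threshold j) <= 1 / 2].
Proof.
by apply: threshold_budget; rewrite ?gap_gt0 ?nsamples_large // /reps leq_addl.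
Qed.

End TesterParameters.

Section CostBound.
Variables (R : realType) (m : nat) (eps : R).
Hypothesis eps_gt0 : 0 < eps.

Local Notation r := (reps m).

(* Scale j costs at most 80 r^2 / base_gap samples: nrounds j ~ 2^j rounds
   of cost 2 r nsamples j ~ 8 r^2 / (base_gap 2^j) each. *)
Lemma cost_scale j :
  ((nrounds m eps j * cost (scale_round m eps j))%N%:R : R) <=
  80 * r%:R ^+ 2 / base_gap m eps.
Proof.
have g0 := base_gap_gt0 m eps_gt0; have r1 : (1 : R) <= r%:R by rewrite ler1n /reps addn4.
rewrite /nrounds; case: ifP => [gap_le1|_]; last first.
  by rewrite mul0n; apply: mulr_ge0; [rewrite mulr_ge0 ?sqr_ge0 | rewrite invr_ge0 ltW].
set t := nsamples m eps j; set P : R := 2 ^+ j.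
have P_gt0 : 0 < P by rewrite exprn_gt0.
have cost_le : ((cost (scale_round m eps j))%:R : R) <= 2 * r%:R * t%:R.
  rewrite (le_trans (_ : _ <= (r * (t + t))%N%:R)) ?ler_nat ?cost_round //.
  by rewrite natrM natrD; lra.
have t_le : t%:R * gap m eps j <= 5 * r%:R.
  have gj := gap_gt0 m eps_gt0 j.
  have r4 : 0 < 4 * r%:R :> R by lra.
  have /andP[+ _] := truncn_itv (ltW (divr_gt0 r4 gj)).
  rewrite ler_pdivlMr // => trunc_le.
  have -> : (t%:R : R) = (Num.truncn (4 * r%:R / gap m eps j))%:R + 1.
    by rewrite /t /nsamples natr1.
  rewrite mulrDl mul1r; lra.
rewrite natrM.
have -> : ((2 ^ (j + 3))%N%:R : R) = 8 * P by rewrite natrX exprD /P; ring.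
rewrite ler_pdivlMr //.
apply: le_trans (_ : 8 * P * (2 * r%:R * t%:R) * base_gap m eps <= _).
  by rewrite ler_pM2r // ler_pM2l // mulr_gt0.
have -> : 8 * P * (2 * r%:R * t%:R) * base_gap m eps = 16 * r%:R * (t%:R * gap m eps j).
  by rewrite /gap /P; ring.
have : 0 <= r%:R :> R by [].
nra.
Qed.

End CostBound.

(* ln 2 >= 1/2, from ln (1 - 1/2) <= -1/2. *)
Lemma ln2_ge_half (R : realType) : 1 / 2 <= ln (2 : R).
Proof.
have := @le_ln1Dx R (- (1 / 2)); rewrite (_ : 1 + - (1 / 2) = 2^-1); last by field.
by rewrite lnV ?posrE //; lra.
Qed.

Lemma reps_le_ln (R : realType) m : (0 < m)%N ->
  (reps m)%:R <= 5 * (1 + ln (m%:R : R)).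
Proof.
move=> m_gt0; set T := trunc_log 2 m.
have T_ln : ln (2 ^+ T : R) <= ln (m%:R : R).
  by rewrite ler_ln ?posrE ?exprn_gt0 ?ltr0n // -natrX ler_nat trunc_logP.
rewrite lnXn // -[_ *+ T]mulr_natr in T_ln.
have half_T : T%:R / 2 <= ln (m%:R : R).
  apply: le_trans T_ln; rewrite [X in _ <= X]mulrC; apply: ler_wpM2l => //.
  by rewrite -div1r ln2_ge_half.
have : 0 <= ln (m%:R : R) by rewrite ln_ge0 // ler1n.
have reps_T : (reps m)%:R = T%:R + 5 :> R.
  by rewrite /reps /nscales -/T -natrD; congr (_%:R); lia.
lra.
Qed.

Lemma cost_tester (R : realType) m (eps : R) : (0 < m)%N -> 0 < eps ->
  (cost (tester m eps))%:R <= (80 * 625) * (1 + ln (m%:R : R)) ^+ 4 / eps ^+ 2.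
Proof.
move=> m_gt0 eps_gt0; set J := nscales m; set r : R := (reps m)%:R.
have by_scale : ((cost (tester m eps))%:R : R) <=
    \sum_(j < J.+1) (nrounds m eps j * cost (scale_round m eps j))%N%:R.
  rewrite -natr_sum ler_nat; apply: leq_trans (cost_all_of _ _) _.
  apply: leq_sum => j _; apply: leq_trans (cost_all_of _ _) _.
  by rewrite sum_nat_const card_ord.
have {}by_scale :
    ((cost (tester m eps))%:R : R) <= J.+1%:R * (80 * r ^+ 2 / base_gap m eps).
  apply: le_trans by_scale _.
  apply: (@le_trans _ _ (\sum_(j < J.+1) (80 * r ^+ 2 / base_gap m eps))).
    by apply: ler_sum => j _; apply: cost_scale.
  by rewrite sumr_const card_ord [X in _ <= X]mulr_natl.
apply: le_trans by_scale _.
have -> : J.+1%:R * (80 * r ^+ 2 / base_gap m eps) =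
          80 * (r ^+ 2 * (J.+1%:R * (J + 2)%:R)) / eps ^+ 2.
  by rewrite /base_gap; field; rewrite -/J !lt0r_neq0 ?exprn_gt0 ?ltr0n ?addn2.
rewrite ler_pM2r ?invr_gt0 ?exprn_gt0 // -mulrA ler_pM2l //.
have r_ge0 : 0 <= r by [].
have scales_le : J.+1%:R * (J + 2)%:R <= r * r.
  by apply: ler_pM; rewrite ?ler_nat // /r /reps -/J; lia.
have r_ln : r ^+ 4 <= (5 * (1 + ln (m%:R : R))) ^+ 4.
  by rewrite lerXn2r ?nnegrE ?reps_le_ln //; apply: le_trans r_ge0 (reps_le_ln R m_gt0).
apply: le_trans (ler_wpM2l (sqr_ge0 r) scales_le) _.
by move: r_ln; rewrite exprMn -expr2 -exprD; lra.
Qed.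

Lemma one_sub_prod_le (R : realDomainType) n (f : 'I_n -> R) :
  (forall j, 0 <= f j <= 1) -> 1 - \prod_(j < n) f j <= \sum_(j < n) (1 - f j).
Proof.
elim: n f => [|n IH] f f01; first by rewrite big_ord0 big_ord0 subrr.
rewrite big_ord_recr [X in _ <= X]big_ord_recr /=.
have := IH (fun j => f (widen_ord (leqnSn n) j)) (fun j => f01 _).
have /andP[? ?] := f01 ord_max.
have : 0 <= \prod_(j < n) f (widen_ord (leqnSn n) j) <= 1.
  by rewrite prodr_ge0 ?prodr_ile1 // => j _;
    have /andP[] := f01 (widen_ord (leqnSn n) j).
move=> /andP[? ?]; nra.
Qed.

Lemma one_sub_expr_le (R : realDomainType) (a : R) K :
  0 <= a <= 1 -> 1 - a ^+ K <= K%:R * (1 - a).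
Proof.
move=> a01; have := @one_sub_prod_le R K (fun _ => a) (fun _ => a01).
by rewrite prodr_const sumr_const !card_ord mulr_natl.
Qed.

Lemma geometric_decay (R : realType) (x : R) K :
  0 <= x <= 1 -> 2 <= K%:R * x -> (1 - x) ^+ K <= 1 / 3.
Proof.
move=> /andP[x0 x1] Kx.
have : (1 - x) ^+ K <= expR (- x) ^+ K.
  by rewrite lerXn2r ?nnegrE ?expR_ge0 ?subr_ge0 // expR_ge1Dx.
rewrite -expRM_natl => /le_trans; apply.
apply: le_trans (_ : expR (- 2) <= _); first by rewrite ler_expR; lra.
rewrite expRN -div1r ler_pdivrMr ?expR_gt0 //.
have := expR_ge1Dx (2 : R); lra.
Qed.

Lemma geometric_sum_pow2 n : (\sum_(j < n) 2 ^ (j + 3) + 8 = 2 ^ (n + 3))%N.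
Proof.
elim: n => [|n IH]; first by rewrite big_ord0.
by rewrite big_ord_recr /= addnAC IH addSn expnS mul2n -addnn.
Qed.

Lemma sum_nrounds (R : realType) m (eps : R) :
  (\sum_(j < (nscales m).+1) nrounds m eps j <= 2 ^ reps m)%N.
Proof.
apply: leq_trans (_ : \sum_(j < (nscales m).+1) 2 ^ (j + 3) <= _)%N.
  by apply: leq_sum => j _; rewrite /nrounds; case: ifP.
have := geometric_sum_pow2 (nscales m).+1.
rewrite /reps (_ : ((nscales m).+1 + 3 = nscales m + 4)%N); lia.
Qed.

Lemma sqdist_bit (R : realType) (d e : bool -> R) : is_dist d -> is_dist e ->
  sqdist d e = 2 * (d true - e true) ^+ 2.
Proof.
move=> [_ [_ ed]] [_ [_ ee]]; rewrite /sqdist.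
have -> : d false = 1 - d true by rewrite -ed addrK.
have -> : e false = 1 - e true by rewrite -ee addrK.
ring.
Qed.

Lemma bit_gap_le1 (R : realType) (d e : bool -> R) : is_dist d -> is_dist e ->
  (d true - e true) ^+ 2 <= 1.
Proof. move=> [? [? ?]] [? [? ?]]; nra. Qed.

Lemma detectable_scale (R : realType) m (eps : R) (d : 'I_m -> R) :
  (0 < m)%N -> 0 < eps -> (forall i, d i <= 1) ->
  m%:R * eps ^+ 2 < 2 * \sum_(i < m) d i ->
  exists2 j, (j <= nscales m)%N &
    gap m eps j <= 1 /\
    m%:R <= (\sum_(i < m) indic (gap m eps j <= d i)) * 2 ^+ j.+1 :> R.
Proof.
move=> m_gt0 eps_gt0 d_le1 large; set J := nscales m.
have m_lt : (m < 2 ^ J)%N by apply: trunc_log_ltn.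
have sum_large : m%:R * base_gap m eps * (J%:R + 2) / 2 < \sum_(i < m) d i.
  rewrite /base_gap -/J; move: large.
  have -> : m%:R * (eps ^+ 2 / (J + 2)%:R) * (J%:R + 2) / 2 = m%:R * eps ^+ 2 / 2.
    by rewrite natrD; field; rewrite -natrD pnatr_eq0 addn2.
  lra.
have [j jJ many] := dyadic_bucket (base_gap_gt0 m eps_gt0) m_lt sum_large.
exists j => //; split=> //.
case: (boolP [exists i, gap m eps j <= d i]) => [/existsP[i reached]|/existsPn none].
  exact: le_trans reached (d_le1 i).
move: many; rewrite big1 ?mul0r => [|i _]; last by rewrite /indic (negbTE (none i)).
by rewrite leNgt ltr0n m_gt0.
Qed.

Section TesterAnalysis.
Variables (R : realType) (m : nat) (eps : R) (p q : 'I_m -> bool -> R).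
Hypotheses (Hp : forall i, is_dist (p i)) (Hq : forall i, is_dist (q i)).
Hypotheses (m_gt0 : (0 < m)%N) (eps_gt0 : 0 < eps).

Local Notation P := (prob_yes p q).
Local Notation J := (nscales m).

Lemma scale_round_bounds j : 0 <= P (scale_round m eps j) <= 1.
Proof. exact/(prob_yes_bounds Hp Hq)/wf_round. Qed.

Lemma prob_tester :
  P (tester m eps) = \prod_(j < J.+1) P (scale_round m eps j) ^+ nrounds m eps j.
Proof.
rewrite (prob_all_of Hp Hq) => [|j]; last by apply: wf_all_of => _; apply: wf_round.
apply: eq_bigr => j _; rewrite (prob_all_of Hp Hq) => [|_]; last exact: wf_round.
by rewrite prodr_const card_ord.
Qed.

Lemma tester_null : (forall i, p i = q i) -> 2 / 3 <= P (tester m eps).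
Proof.
move=> pq; set r := reps m.
have round_fail j : 1 - P (scale_round m eps j) <= (1 / 4) ^+ r.
  by have [th_gt0 small _] := scale_round_budget m eps_gt0 j; apply: round_null.
have quarter : (0 : R) <= (1 / 4) ^+ r by rewrite exprn_ge0.
have : 1 - P (tester m eps) <= (2 ^ r)%N%:R * (1 / 4) ^+ r.
  rewrite prob_tester; apply: le_trans (one_sub_prod_le _) _ => [j|].
    by rewrite exprn_ge0 ?exprn_ile1 //; have /andP[] := scale_round_bounds j.
  apply: le_trans (_ : \sum_(j < J.+1) (nrounds m eps j)%:R * (1 / 4) ^+ r <= _).
    apply: ler_sum => j _; apply: le_trans (one_sub_expr_le _ (scale_round_bounds j)) _.
    by rewrite ler_wpM2l.
  by rewrite -mulr_suml -natr_sum ler_wpM2r // ler_nat sum_nrounds.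
rewrite natrX -exprMn (_ : 2 * (1 / 4) = 1 / 2 :> R); last by field.
have : (1 / 2 : R) ^+ r <= (1 / 2) ^+ 2.
  by apply: ler_wiXn2l; rewrite /r /reps ?addn4 //; lra.
rewrite expr2; lra.
Qed.

(* Soundness: if the average squared distance exceeds eps^2 the tester
   accepts with probability <= 1/3, because at a detectable scale j every
   one of its 2^(j+3) rounds rejects with probability >= 2^-(j+2). *)
Lemma tester_alt :
  eps ^+ 2 < m%:R^-1 * \sum_(i < m) sqdist (p i) (q i) ->
  P (tester m eps) <= 1 / 3.
Proof.
move=> far_avg; pose d i := (p i true - q i true) ^+ 2.
have [j jJ [gap_le1 many]] : exists2 j, (j <= J)%N &
    gap m eps j <= 1 /\
    m%:R <= (\sum_(i < m) indic (gap m eps j <= d i)) * 2 ^+ j.+1 :> R.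
  apply: detectable_scale => // [i|]; first exact: bit_gap_le1.
  move: far_avg; rewrite (eq_bigr _ (fun i _ => sqdist_bit (Hp i) (Hq i))) -mulr_sumr.
  by rewrite ltr_pdivlMl ?ltr0n // mulrC.
set N := \sum_(i < m) _ in many; set K := nrounds m eps j.
set x := N / (2 * m%:R).
have m_pos : 0 < (m%:R : R) by rewrite ltr0n.
have N_le : N <= m%:R.
  rewrite -[m in m%:R]card_ord -sumr_const; apply: ler_sum => i _.
  by rewrite /indic; case: ifP.
have x01 : 0 <= x <= 1.
  rewrite divr_ge0 ?sumr_ge0 //= => [|i _]; last exact: indic_ge0.
  by rewrite ler_pdivrMr ?mulr_gt0 //; lra.
have round_le : P (scale_round m eps j) <= 1 - x.
  have [th_gt0 _ small] := scale_round_budget m eps_gt0 j.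
  apply: (round_alt Hp Hq m_gt0 th_gt0 (far := fun i => gap m eps j <= d i) small).
  move=> i far_i.
  rewrite exprMn /threshold mulrCA mulrAC divff ?mul1r ?pnatr_eq0 //.
  by rewrite mulr1; apply: ler_wpM2l; rewrite ?sqr_ge0.
have Kx : 2 <= K%:R * x.
  rewrite /K /nrounds gap_le1 natrX exprD /x.
  have -> : (2 ^+ j * 2 ^+ 3 * (N / (2 * m%:R)) : R) = 2 * (N * 2 ^+ j.+1) / m%:R.
    by rewrite [2 ^+ j.+1]exprS; field; rewrite lt0r_neq0.
  by rewrite ler_pdivlMr //; lra.
apply: le_trans (geometric_decay x01 Kx).
rewrite prob_tester (bigD1 (Ordinal (jJ : (j < J.+1)%N))) //=.
apply: le_trans (_ : P (scale_round m eps j) ^+ K * 1 <= _).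
  rewrite ler_wpM2l ?exprn_ge0 ?prodr_ile1 // => [|k _].
    by have /andP[] := scale_round_bounds j.
  by have /andP[? ?] := scale_round_bounds k; rewrite exprn_ge0 ?exprn_ile1.
have /andP[? ?] := x01; have /andP[? ?] := scale_round_bounds j.
by rewrite mulr1; apply: lerXn2r; rewrite ?nnegrE //; lra.
Qed.

End TesterAnalysis.

Theorem mainTheorem2 (R : realType) :
  exists C : R, 0 < C /\
  forall (m : nat) (eps : R), (1 <= m)%N -> 0 < eps ->
  exists A : alg R m,
    wf_alg A /\
    (cost A)%:R <= C * (1 + ln (m%:R : R)) ^+ 4 / eps ^+ 2 /\
    forall p q : 'I_m -> bool -> R,
      (forall i, is_dist (p i)) -> (forall i, is_dist (q i)) ->
      ((forall i, p i = q i) -> 2 / 3 <= prob_yes p q A) /\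
      (eps ^+ 2 < (m%:R)^-1 * \sum_(i < m) sqdist (p i) (q i) ->
         2 / 3 <= 1 - prob_yes p q A).
Proof.
exists (80 * 625); split=> // m eps m_gt0 eps_gt0.
exists (tester m eps); split; first exact: wf_tester.
split; first exact: cost_tester.
move=> p q Hp Hq; split; first exact: tester_null.
by move=> far; have := tester_alt Hp Hq m_gt0 eps_gt0 far; lra.
Qed.
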